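(* For every $n\in\mathbb{N}$, both $10^{-n}\det[b_{i+j}]_{0\le i,j\le n}$ and $24^{-n}\det[A_{i+j}]_{0\le i,j\le n}$ are integers.
   Context: For $m\in\mathbb{N}$, the Apéry numbers are $b_m=\sum_{k=0}^m\binom{m}{k}^2\binom{m+k}{k}$ and $A_m=\sum_{k=0}^m\binom{m}{k}^2\binom{m+k}{k}^2$. For a sequence $(a_m)_{m\ge0}$, $\det[a_{i+j}]_{0\le i,j\le n}$ denotes the determinant of the $(n+1)\times(n+1)$ Hankel matrix with $(i,j)$-entry $a_{i+j}$. *)

From HB Require Import structures.
From mathcomp Require Import all_boot all_order all_algebra.
Set Implicit Arguments. Unset Strict Implicit. Unset Printing Implicit Defensive.
Import Order.TTheory GRing.Theory Num.Theory.

Definition apery_b (m : nat) : nat :=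
  \sum_(0 <= k < m.+1) 'C(m, k) ^ 2 * 'C(m + k, k).

Definition apery_A (m : nat) : nat :=
  \sum_(0 <= k < m.+1) 'C(m, k) ^ 2 * 'C(m + k, k) ^ 2.

Definition hankel_det (a : nat -> nat) (n : nat) : int :=
  \det (\matrix_(i < n.+1, j < n.+1) (Posz (a (i + j)%N))).

(** Subtracting [c] times row [i - 1] from row [i] of a Hankel matrix shows
    that [d ^ n] divides [det [a_(i+j)]_(0 <= i, j <= n)] as soon as
    [a_(m+1) = c a_m (mod d)] for all [m].  For sums of
    [C(m,k)^2 C(m+k,k)^e], Lucas' theorem gives the congruence
    [a_(pm+r) = a_m a_r (mod p)] for [r < p], so [b_m = 3^m (mod 5)],
    [b_m = 1 (mod 2)] and [A_m = 2^m (mod 3)].  Modulo 8, every summand of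
    [A_m] with [k > 0] is the square of the even number [C(m+k,2k) C(2k,k)],
    whence [A_m + 1 = 2 D_m (mod 8)] for the central Delannoy number [D_m],
    and [D_m = 2m + 1 (mod 4)] because [(X + 2)^2 = X^2] over [Z/4].  Hence
    [b_(m+1) = 3 b_m (mod 10)] and [A_(m+1) = 5 A_m (mod 24)]. *)

From mathcomp Require Import all_boot all_order all_algebra.
From mathcomp Require Import zify ring.
Set Implicit Arguments. Unset Strict Implicit. Unset Printing Implicit Defensive.
Import GRing.Theory.
Local Open Scope ring_scope.

Section HankelDvd.

Variables (a : nat -> nat) (c d n : nat).
Hypothesis a_mod : forall m, (a m.+1 = c * a m %[mod d])%N.

Let hankel : 'M[int]_n.+1 := \matrix_(i, j) (a (i + j))%:Z.

Let step_mx : 'M[int]_n.+1 :=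
  \matrix_(i, j) (if i == j then 1 else if i == j.+1 :> nat then - c%:Z else 0).

Let quot (m : nat) : int := (((a m.+1)%:Z - c%:Z * (a m)%:Z) %/ d)%Z.

Let quot_mx : 'M[int]_n.+1 :=
  \matrix_(i, j) (if i == 0 :> nat then (a j)%:Z else quot (i.-1 + j)).

Let scale_row : 'rV[int]_n.+1 := \row_i (if i == 0 :> nat then 1 else d%:Z).

Lemma det_step_mx : \det step_mx = 1.
Proof.
rewrite det_trig ?big1 // => [i _|]; first by rewrite mxE eqxx.
apply/forallP => i; apply/forallP => j; apply/implyP => lt_ij.
by rewrite mxE -val_eqE /= (ltn_eqF lt_ij) (ltn_eqF (leq_trans lt_ij (leqnSn j))).
Qed.

Lemma step_mx_hankel : step_mx *m hankel = diag_mx scale_row *m quot_mx.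
Proof.
rewrite mul_diag_mx; apply/matrixP => i k; rewrite !mxE (bigD1 i) //= !mxE eqxx mul1r.
case: i => [[|i] lt_in] /=.
  by rewrite big1 ?addr0 ?mul1r // => j ne_j0; rewrite !mxE eq_sym (negbTE ne_j0) mul0r.
pose i' : 'I_n.+1 := Ordinal (ltnW lt_in).
rewrite (bigD1 i') /= -?val_eqE ?(ltn_eqF (ltnSn i)) //.
rewrite !mxE -val_eqE /= (gtn_eqF (ltnSn i)) eqxx big1 ?addr0 => [|j /andP[ne_ji ne_ji']]; last first.
  rewrite !mxE eq_sym (negbTE ne_ji); case: eqP => [/= [eq_ji]|_]; last by rewrite mul0r.
  by move: ne_ji'; rewrite -val_eqE /= eq_ji eqxx.
have dvd_d : (d%:Z %| (a (i + k).+1)%:Z - c%:Z * (a (i + k))%:Z)%Z.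
  by rewrite -eqz_mod_dvd -PoszM; apply/eqP; rewrite !modz_nat a_mod.
by rewrite /quot [RHS]mulrC divzK // addSn mulNr.
Qed.

Lemma hankel_det_dvd : exists z : int, hankel_det a n = Posz (d ^ n) * z.
Proof.
exists (\det quot_mx); rewrite /hankel_det -/hankel.
have := congr1 determinant step_mx_hankel.
rewrite !det_mulmx det_step_mx mul1r det_diag big_ord_recl => ->.
rewrite !mxE /= mul1r; under eq_bigr do rewrite mxE /=.
by rewrite prodr_const card_ord -[Posz (d ^ n)]natz natrX natz.
Qed.

End HankelDvd.

Lemma coef_Xadd1_exp (R : nzSemiRingType) n k :
  (('X + 1 : {poly R}) ^+ n)`_k = 'C(n, k)%:R.
Proof.
rewrite exprD1n coef_sum.
under eq_bigr => i _ do rewrite coefMn coefXn mulrb eq_sym (fun_if (fun x => x *+ _)) mul0rn.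
rewrite -big_mkcond (big_ord1_eq _ (fun i => 'C(n, i)%:R)) ltnS.
by case: leqP => // /bin_small ->.
Qed.

Lemma coef_comp_Xn_mul (R : comNzRingType) (P Q : {poly R}) p c s :
  (size Q <= p)%N -> (s < p)%N -> ((P \Po 'X^p) * Q)`_(p * c + s) = P`_c * Q`_s.
Proof.
move=> szQ ltsp; have p_gt0 : (0 < p)%N by apply: leq_ltn_trans ltsp.
have lt_pc : (p * c < (p * c + s).+1)%N by rewrite ltnS leq_addr.
rewrite coefM (bigD1 (Ordinal lt_pc)) //=.
rewrite coef_comp_poly_Xn // dvdn_mulr // mulKn // addKn big1 ?addr0 // => i ne_ic.
rewrite coef_comp_poly_Xn //; case: dvdnP => [[j def_i]|_]; last by rewrite mul0r.
suff /(nth_default 0) -> : (size Q <= p * c + s - i)%N by rewrite mulr0.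
have le_i : (j * p <= p * c + s)%N by rewrite -def_i -ltnS.
have ne_jc : j != c.
  by apply: contraNneq ne_ic => ejc; apply/eqP/val_inj; rewrite /= def_i ejc mulnC.
have lt_jc : (j < c)%N.
  rewrite ltn_neqAle ne_jc -ltnS -(ltn_pmul2r p_gt0).
  by apply: leq_ltn_trans le_i _; nia.
have : (j.+1 * p <= c * p)%N by rewrite leq_mul2r lt_jc orbT.
rewrite def_i mulSn; lia.
Qed.

Lemma Fp_bin_lucas p a r c s : prime p -> (r < p)%N -> (s < p)%N ->
  ('C(p * a + r, p * c + s)%:R : 'F_p) = 'C(a, c)%:R * 'C(r, s)%:R.
Proof.
move=> p_pr ltrp ltsp.
have pcharFp : p \in [pchar {poly 'F_p}] by rewrite pchar_poly pchar_Fp.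
have frobX1 : ('X + 1 : {poly 'F_p}) ^+ p = 'X^p + 1.
  rewrite -(pFrobenius_autE pcharFp) pFrobenius_autD_comm; last exact: mulrC.
  by rewrite !pFrobenius_autE expr1n.
have szX1r : (size (('X + 1 : {poly 'F_p}) ^+ r) <= p)%N.
  by apply/leq_sizeP => i lepi; rewrite coef_Xadd1_exp bin_small // (leq_trans ltrp).
rewrite -!coef_Xadd1_exp exprD exprM frobX1.
have -> : ('X^p + 1 : {poly 'F_p}) ^+ a = ('X + 1) ^+ a \Po 'X^p.
  elim: a => [|a IHa]; first by rewrite !expr0 -polyC1 comp_polyC.
  by rewrite !exprS comp_polyM -IHa comp_polyD comp_polyX -polyC1 comp_polyC.
exact: coef_comp_Xn_mul.
Qed.

Lemma Fp_bin_addn_lucas p a r c s : prime p -> (r < p)%N -> (s < p)%N ->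
  ('C(p * a + r + (p * c + s), p * c + s)%:R : 'F_p) =
  'C(a + c, c)%:R * 'C(r + s, s)%:R.
Proof.
move=> p_pr ltrp ltsp.
have [ltrsp | lersp] := ltnP (r + s) p.
  have -> : (p * a + r + (p * c + s) = p * (a + c) + (r + s))%N by lia.
  exact: Fp_bin_lucas.
(* A carry occurs in [r + s], and both sides vanish. *)
have lt_rsp_p : (r + s - p < p)%N by lia.
have lt_rsp_s : (r + s - p < s)%N by lia.
have -> : (p * a + r + (p * c + s) = p * (a + c).+1 + (r + s - p))%N by lia.
have := Fp_bin_lucas 1 0 p_pr lt_rsp_p ltsp.
rewrite muln1 muln0 add0n subnKC // => ->.
by rewrite Fp_bin_lucas // (bin_small lt_rsp_s) !mulr0.
Qed.

Lemma Fp_natP p x y : prime p -> reflect ((x%:R : 'F_p) = y%:R) (x == y %[mod p])%N.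
Proof.
move=> p_pr; apply: (iffP eqP) => [eq_xy | /(congr1 val)].
  by rewrite -(Fp_nat_mod p_pr) eq_xy Fp_nat_mod.
by rewrite /= !val_Fp_nat.
Qed.

Lemma Fp_lucas_exp p (f : nat -> 'F_p) c : prime p ->
    (forall a r, (r < p)%N -> f (p * a + r)%N = f a * f r) ->
    (forall r, (r < p)%N -> f r = c%:R ^+ r) ->
  forall m, f m = c%:R ^+ m.
Proof.
move=> p_pr f_lucas f_digit m; have p_gt1 := prime_gt1 p_pr.
have fermat : (c%:R : 'F_p) ^+ p = c%:R.
  by rewrite -natrX; apply/Fp_natP/eqP/fermat_little.
elim/ltn_ind: m => m IHm; have [/f_digit // | le_pm] := ltnP m p.
have ltmp : (m %% p < p)%N by rewrite ltn_mod ltnW.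
rewrite (divn_eq m p) mulnC f_lucas // IHm ?f_digit ?ltn_Pdiv ?(leq_trans (prime_gt0 p_pr) le_pm) //.
by rewrite exprD exprM fermat.
Qed.

Definition apery_term (e m k : nat) : nat := ('C(m, k) ^ 2 * 'C(m + k, k) ^ e)%N.

Definition apery_sum (e m : nat) : nat := (\sum_(0 <= k < m.+1) apery_term e m k)%N.

Lemma apery_sum_widen e m N : (m < N)%N ->
  apery_sum e m = (\sum_(0 <= k < N) apery_term e m k)%N.
Proof.
move=> ltmN; rewrite /apery_sum [RHS](big_cat_nat _ (n := m.+1)) //=.
rewrite [X in _ = (_ + X)%N]big1_seq ?addn0 // => k.
by rewrite mem_index_iota => /andP[_ /andP[/bin_small ltmk _]]; rewrite /apery_term ltmk.
Qed.

Lemma apery_term_lucas e p a r c s : prime p -> (r < p)%N -> (s < p)%N ->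
  ((apery_term e (p * a + r) (p * c + s))%:R : 'F_p) =
  (apery_term e a c)%:R * (apery_term e r s)%:R.
Proof.
move=> p_pr ltrp ltsp; rewrite /apery_term !natrM !natrX.
by rewrite Fp_bin_lucas // Fp_bin_addn_lucas // !exprMn; ring.
Qed.

Lemma apery_sum_lucas e p a r : prime p -> (r < p)%N ->
  ((apery_sum e (p * a + r))%:R : 'F_p) = (apery_sum e a)%:R * (apery_sum e r)%:R.
Proof.
move=> p_pr ltrp.
rewrite (@apery_sum_widen e (p * a + r) (a.+1 * p)); last by nia.
rewrite (@apery_sum_widen e r p) // natr_sum big_nat_mul /apery_sum natr_sum mulr_suml.
apply: eq_bigr => c _; rewrite -{1}[(c * p)%N]add0n big_addn mulSn addnK natr_sum mulr_sumr.
by apply: eq_big_nat => s /andP[_ ltsp]; rewrite [(s + _)%N]addnC [(c * p)%N]mulnC apery_term_lucas.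
Qed.

Lemma apery_sum_mod_exp e p c : prime p ->
    (forall r, (r < p)%N -> (apery_sum e r = c ^ r %[mod p])%N) ->
  forall m, (apery_sum e m = c ^ m %[mod p])%N.
Proof.
move=> p_pr apery_digit m; apply/eqP/(Fp_natP _ _ p_pr); rewrite natrX.
apply: (Fp_lucas_exp (f := fun m => (apery_sum e m)%:R)) => // [a r|r lt_rp].
  exact: apery_sum_lucas.
by rewrite -natrX; apply/(Fp_natP _ _ p_pr)/eqP/apery_digit.
Qed.

Lemma apery_b_mod5 m : (apery_b m = 3 ^ m %[mod 5])%N.
Proof.
apply: (apery_sum_mod_exp (e := 1)) => //.
by case=> [|[|[|[|[|r]]]]] //; rewrite /apery_sum unlock.
Qed.

Lemma apery_b_mod2 m : (apery_b m = 1 %[mod 2])%N.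
Proof.
rewrite -[X in _ = X %[mod 2]](exp1n m); apply: (apery_sum_mod_exp (e := 1)) => //.
by case=> [|[|r]] //; rewrite /apery_sum unlock.
Qed.

Lemma apery_A_mod3 m : (apery_A m = 2 ^ m %[mod 3])%N.
Proof.
apply: (apery_sum_mod_exp (e := 2)) => //.
by case=> [|[|[|r]]] //; rewrite /apery_sum unlock.
Qed.

Lemma sqrn_even_mod8 t : ~~ odd t -> (t ^ 2 = 2 * t %[mod 8])%N.
Proof.
move=> t_even; rewrite -[t]odd_double_half (negbTE t_even) add0n -mul2n.
by rewrite expnMn mulnA -[8%N]/(4 * 2)%N -!muln_modr !modn2 oddX.
Qed.

Lemma bin_mid_even k : (0 < k)%N -> ~~ odd 'C(k.*2, k).
Proof.
case: k => // k _; rewrite doubleS binS.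
have -> : 'C(k.*2.+1, k.+1) = 'C(k.*2.+1, k).
  have e : (k.*2.+1 - k = k.+1)%N by lia.
  by rewrite -e bin_sub //; lia.
by rewrite addnn odd_double.
Qed.

Lemma mul_bin_trinomial m k : (k <= m)%N ->
  ('C(m, k) * 'C(m + k, k) = 'C(m + k, k.*2) * 'C(k.*2, k))%N.
Proof.
move=> le_km; apply/eqP.
rewrite -(@eqn_pmul2r (k`! * k`! * (m - k)`!)) ?muln_gt0 ?fact_gt0 //; apply/eqP.
have fact_m := bin_fact le_km.
have fact_mk := bin_fact (leq_addl m k); rewrite addnK in fact_mk.
have le_2k : (k.*2 <= m + k)%N by lia.
have fact_mk' := bin_fact le_2k.
rewrite (_ : m + k - k.*2 = m - k)%N in fact_mk'; last by lia.
have fact_2k := bin_fact (leq_addr k k); rewrite addKn addnn in fact_2k.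
transitivity (m + k)`!; first by rewrite -fact_mk -fact_m; lia.
by rewrite -fact_mk' -?fact_2k; lia.
Qed.

Definition delannoy (m : nat) : nat := (\sum_(0 <= k < m.+1) 'C(m, k) * 'C(m + k, k))%N.

Lemma delannoy_coef (R : comNzRingType) m :
  (delannoy m)%:R = (('X + 1) ^+ m * ('X + 1 + 1) ^+ m : {poly R})`_m.
Proof.
rewrite [X in _ * X]exprD1n mulr_sumr coef_sum /delannoy natr_sum big_mkord.
apply: eq_bigr => i _; rewrite mulrnAr -exprD coefMn coef_Xadd1_exp -mulrnA.
by rewrite -(bin_sub (leq_addl m i)) addnK mulnC.
Qed.

Lemma delannoy_mod4 m : (delannoy m = if odd m then 3 else 1 %[mod 4])%N.
Proof.
have X2sq : ('X + 1 + 1 : {poly 'Z_4}) ^+ 2 = 'X^2.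
  transitivity ('X^2 + 4%:R * ('X + 1) : {poly 'Z_4}); first by ring.
  by rewrite -polyC_natr pchar_Zp // polyC0 mul0r addr0.
rewrite -!(val_Zp_nat (isT : (1 < 4)%N)); apply: congr1.
rewrite delannoy_coef -[in LHS](odd_double_half m) -mul2n.
case: (odd m) => /=; rewrite [(_ + 1 + 1) ^+ _]exprD exprM X2sq -exprM mulrA coefMXn.
  rewrite ltnNge leq_addl addnK expr1 mulrDr mulr1 -exprSr coefD !coef_Xadd1_exp !bin1 -natrD.
  by rewrite /= -[LHS](Zp_nat_mod (isT : (1 < 4)%N)); congr _%:R; lia.
by rewrite add0n ltnn subnn expr0 mulr1 coef_Xadd1_exp bin0.
Qed.

Lemma apery_A_mod8 m : (apery_A m = if odd m then 5 else 1 %[mod 8])%N.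
Proof.
pose t k := ('C(m, k) * 'C(m + k, k))%N.
have sq_t : (\sum_(1 <= k < m.+1) t k ^ 2 = 2 * \sum_(1 <= k < m.+1) t k %[mod 8])%N.
  rewrite big_distrr -modn_summ -[RHS]modn_summ; congr (_ %% 8)%N.
  apply: eq_big_nat => k /andP[k_gt0]; rewrite ltnS => le_km; rewrite sqrn_even_mod8 // /t.
  by rewrite mul_bin_trinomial // oddM negb_and bin_mid_even ?orbT.
have : (apery_A m + 1 = 2 * delannoy m %[mod 8])%N.
  rewrite /apery_A /delannoy !(big_ltn (ltn0Sn m)) !bin0.
  under eq_big_nat => k _ do rewrite -expnMn.
  by move: sq_t; rewrite /t; lia.
have := delannoy_mod4 m; case: (odd m); lia.
Qed.

Lemma apery_b_succ_mod10 m : (apery_b m.+1 = 3 * apery_b m %[mod 10])%N.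
Proof.
apply/eqP; rewrite -[10%N]/(2 * 5)%N chinese_remainder //; apply/andP; split; apply/eqP.
  by rewrite -modnMmr !apery_b_mod2.
by rewrite -modnMmr !apery_b_mod5 modnMmr expnS.
Qed.

Lemma apery_A_succ_mod24 m : (apery_A m.+1 = 5 * apery_A m %[mod 24])%N.
Proof.
apply/eqP; rewrite -[24%N]/(3 * 8)%N chinese_remainder //; apply/andP; split; apply/eqP.
  by rewrite -modnMmr !apery_A_mod3 modnMmr expnS -[RHS]modnMml.
by rewrite -modnMmr !apery_A_mod8 /=; case: (odd m).
Qed.

Theorem theorem1p3 (n : nat) :
  (exists z : int, hankel_det apery_b n = (Posz (10 ^ n) * z)%R) /\
  (exists z : int, hankel_det apery_A n = (Posz (24 ^ n) * z)%R).
Proof.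
by split; apply: hankel_det_dvd => m; [apply: apery_b_succ_mod10 | apply: apery_A_succ_mod24].
Qed.
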